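(* Let $s,t$ be real numbers with $t\ge s>0$. For every positive integer $n$, $M_n \geq t\, M_{n-1}$.
   Context: For a real number $s$, a positive integer $n$ and a set $P \subseteq \mathbb{R}$, $\mathcal{G}_s^{n\times n}(P)$ denotes the set of all $n\times n$ real upper Hessenberg matrices $A=(a_{ij})$ with $a_{i+1,i} = s$ for $1\le i\le n-1$, $a_{ij}=0$ for $i > j+1$, and $a_{ij}\in P$ for all $i \le j$. For $n\ge 1$, $M_n$ is the maximum of $|\det A|$ over $A\in\mathcal{G}_s^{n\times n}([0,t])$, and $M_0 := 1$. *)

From HB Require Import structures.
From mathcomp Require Import all_boot all_order all_algebra.
From mathcomp Require Import boolp classical_sets reals.
Set Implicit Arguments. Unset Strict Implicit. Unset Printing Implicit Defensive.
Import Order.TTheory GRing.Theory Num.Theory.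
Local Open Scope ring_scope.
Local Open Scope classical_set_scope.

(* Indices are 0-based ('I_n); a_{i+1,i} corresponds to
   val i = (val j).+1. *)
Definition hessG (R : realType) (s : R) (P : set R) (n : nat) : set 'M[R]_n :=
  [set A | forall i j : 'I_n,
      ((j.+1 < i)%N -> A i j = 0) /\
      ((i : nat) = j.+1 -> A i j = s) /\
      ((i <= j)%N -> P (A i j))].

(* M_n = max |det A| over A in G_s^{n x n}([0,t]) for n >= 1, M_0 = 1.
   The maximum exists (compact set, continuous function), so it equals the
   supremum, which is how we define it. *)
Definition interval0t (R : realType) (t : R) : set R := [set x : R | 0 <= x <= t].

Definition absdet (R : realType) (n : nat) (A : 'M[R]_n) : R := `|\det A|.

Definition Mn (R : realType) (s t : R) (n : nat) : R :=
  match n with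
  | 0 => 1
  | m.+1 => sup (@absdet R m.+1 @` @hessG R s (interval0t t) m.+1)
  end.

(** Bordering a Hessenberg matrix [A] of size [n-1] by a new first row
    [(t, 0, ..., 0)] and first column [(t, s, 0, ..., 0)^T] keeps it in the
    class and multiplies its determinant by [t], since the result is block
    lower triangular.  So [t |det A|] belongs to the set whose supremum is
    [M_n]; that set is bounded because all entries lie in [[-t, t]]. *)
From HB Require Import structures.
From mathcomp Require Import all_boot all_order all_algebra.
From mathcomp Require Import boolp classical_sets reals.
From mathcomp Require Import perm zify.
Import Order.TTheory GRing.Theory Num.Theory.
Local Open Scope ring_scope.
Local Open Scope classical_set_scope.

Set Implicit Arguments. Unset Strict Implicit.

Lemma norm_det_le (R : numDomainType) n (A : 'M[R]_n) (c : R) :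
  (forall i j, `|A i j| <= c) -> `|\det A| <= n`!%:R * c ^+ n.
Proof.
move=> Ac; apply: le_trans (ler_norm_sum _ _ _) _.
apply: (@le_trans _ _ (\sum_(p : 'S_n) c ^+ n)).
  apply: ler_sum => p _; rewrite normrM normrX normrN1 expr1n mul1r normr_prod.
  rewrite -[n in c ^+ n]card_ord -prodr_const.
  by apply: ler_prod => i _; rewrite normr_ge0 Ac.
by rewrite sumr_const card_Sn mulr_natl.
Qed.

Section HessenbergClass.
Variables (R : realType) (s : R) (P : set R).

Lemma hessG_norm_le (c : R) n (A : 'M[R]_n) :
  `|s| <= c -> (forall x, P x -> `|x| <= c) -> hessG s P A ->
  forall i j, `|A i j| <= c.
Proof.
move=> s_le_c P_le_c hA i j; have [below [subdiag upper]] := hA i j.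
have [/upper/P_le_c //|j_lt_i] := leqP i j.
have [/below->|i_le_j|/esym/subdiag->//] := ltngtP j.+1 i.
  by rewrite normr0 (le_trans _ s_le_c).
by exfalso; lia.
Qed.

Hypothesis P0 : P 0.

Definition subdiag_mx n : 'M[R]_n :=
  \matrix_(i, j) if i == j.+1 :> nat then s else 0.

Lemma subdiag_mx_hessG n : hessG s P (subdiag_mx n).
Proof.
move=> i j; rewrite !mxE; split; [|split]=> [ij|->|ij]; last first.
- by case: eqP => // i_eq; exfalso; lia.
- by rewrite eqxx.
- by case: eqP => // i_eq; exfalso; lia.
Qed.

Definition hess_border (c : R) m (A : 'M[R]_m) : 'M[R]_(1 + m) :=
  block_mx c%:M 0 (\matrix_(i, _) if i == 0 :> nat then s else 0) A.

Lemma det_hess_border c m (A : 'M[R]_m) : \det (hess_border c A) = c * \det A.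
Proof. by rewrite det_lblock det_scalar1. Qed.

Lemma hess_border_hessG c m (A : 'M[R]_m) :
  P c -> hessG s P A -> hessG s P (hess_border c A).
Proof.
move=> Pc hA i j; rewrite -[i]splitK -[j]splitK.
case: (split i) => [i0|i']; case: (split j) => [j0|j'].
- by rewrite block_mxEul !mxE !ord1 eqxx mulr1n.
- rewrite block_mxEur mxE ord1 /=; split=> //; split=> // ?; exfalso; lia.
- rewrite block_mxEdl !mxE ord1 /=; split; [|split]=> [ij|ij|ij]; last first.
  + by exfalso; lia.
  + by rewrite ifT //; apply/eqP; lia.
  + by rewrite ifF //; apply/eqP; lia.
- rewrite block_mxEdr /=; have [below [subdiag upper]] := hA i' j'.
  split; [|split]=> ij; [apply: below|apply: subdiag|apply: upper]; lia.
Qed.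

End HessenbergClass.

(* [M_0 = 1] is the determinant of the unique 0 x 0 matrix. *)
Lemma Mn_sup (R : realType) (s t : R) n :
  Mn s t n = sup (@absdet R n @` @hessG R s (interval0t t) n).
Proof.
case: n => [|n] //=.
suff -> : @absdet R 0 @` @hessG R s (interval0t t) 0 = [set 1] by rewrite sup1.
apply/seteqP; split=> [x [A _ <-]|x ->]; first by rewrite /absdet det_mx00 normr1.
by exists 0; [case | rewrite /absdet det_mx00 normr1].
Qed.

Section BorderedDeterminants.
Variables (R : realType) (s t : R).
Hypothesis s_le_t : `|s| <= t.

Let S n := @absdet R n @` @hessG R s (interval0t t) n.

Let t_ge0 : 0 <= t. Proof. exact: le_trans (normr_ge0 s) s_le_t. Qed.

Lemma absdet_hessG_ubound n : ubound (S n) (n`!%:R * t ^+ n).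
Proof.
move=> _ [A hA <-]; apply: norm_det_le; apply: hessG_norm_le hA => //.
by move=> x /andP[x_ge0 x_le_t]; rewrite ger0_norm.
Qed.

Lemma absdet_hess_border m (A : 'M[R]_m) :
  hessG s (interval0t t) A -> S m.+1 (t * absdet A).
Proof.
move=> hA; exists (hess_border s t A).
  by apply: hess_border_hessG => //; rewrite /interval0t /= ?lexx t_ge0.
by rewrite /absdet det_hess_border normrM ger0_norm.
Qed.

Lemma image_absdet_hessG_neq0 n : S n !=set0.
Proof.
exists (absdet (subdiag_mx s n)); exists (subdiag_mx s n) => //.
by apply: subdiag_mx_hessG; rewrite /interval0t /= lexx.
Qed.

Lemma has_sup_absdet_hessG n : has_sup (S n).
Proof.
split; first exact: image_absdet_hessG_neq0.
by exists (n`!%:R * t ^+ n); exact: absdet_hessG_ubound.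
Qed.

End BorderedDeterminants.

Theorem lemma3p1 (R : realType) (s t : R) (n : nat) :
  0 < s -> s <= t -> (0 < n)%N -> t * Mn s t n.-1 <= Mn s t n.
Proof.
move=> s_gt0 s_le_t; case: n => // m _ /=.
have t_gt0 : 0 < t := lt_le_trans s_gt0 s_le_t.
have norm_s_le_t : `|s| <= t by rewrite gtr0_norm.
rewrite !Mn_sup mulrC -ler_pdivlMr //; apply: ge_sup.
  exact: image_absdet_hessG_neq0.
move=> _ [A hA <-]; rewrite ler_pdivlMr // mulrC.
apply: sup_upper_bound; first exact: has_sup_absdet_hessG.
exact: absdet_hess_border.
Qed.
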